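(* Every system execution $M$ (in the sense of the context) that satisfies the Lazy Set axioms A0, A1, A2 is linearizable: there is a linear ordering $<_0$ of the events of $M$ extending $<^M$ such that $<_0$ together with $\gamma^M$ satisfies FS0, FS1 and FS2.
   Context: A system execution $M$ consists of: a set of events, partitioned into low-level events (actions) and high-level events; unary predicates $\mathrm{Add},\mathrm{Rem},\mathrm{Cnt}$ on events; a binary relation $<$ (temporal precedence) on events which is a partial order such that every event has only finitely many predecessors, and moreover Lamport's finiteness property holds: for every event $x$ there is a finite set $E$ such that every event $y\notin E$ satisfies $x<y$; functions $\mathrm{Begin},\mathrm{End}$ from events to actions, with $\mathrm{Begin}(e)=\mathrm{End}(e)=e$ for every action $e$; functions $\chi$ from events to $\{0,1,f\}$, $\mathrm{val}$ from events to $\mathbb N$, and $\gamma$ from events to events. The order on all events is determined by the order on actions: for events $X,Y$ (actions or high-level), $X<Y$ iff $\mathrm{End}(X)<\mathrm{Begin}(Y)$. Notation: for $p\in\{0,1,f\}$, $\mathrm{Add}^p(a)$ abbreviates $\mathrm{Add}(a)\wedge\chi(a)=p$, and $\mathrm{Rem}^p,\mathrm{Cnt}^p$ similarly; for $p\in\{0,1\}$, $\mathrm{Op}^p(a)$ abbreviates $(\mathrm{Add}(a)\vee\mathrm{Rem}(a)\vee\mathrm{Cnt}(a))\wedge\chi(a)=p$. Lazy Set axioms: A0: $\mathrm{Add},\mathrm{Rem},\mathrm{Cnt}$ are pairwise disjoint; $\mathrm{Add}$ and $\mathrm{Rem}$ events are actions and $\mathrm{Cnt}$ events are high-level events; for every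 event $X$, $\mathrm{Begin}(X)$ and $\mathrm{End}(X)$ are actions; for $\mathrm{Cnt}$ events $E$, $\mathrm{Begin}(E)<\mathrm{End}(E)$; restricted to actions, $<$ is a linear ordering. A1: for every event $A$ with $\mathrm{Op}^1(A)$: $\mathrm{Add}^0(\gamma(A))$, $\mathrm{val}(\gamma(A))=\mathrm{val}(A)$, $\gamma(A)<\mathrm{End}(A)$, and there is no event $R$ with $\mathrm{Rem}^1(R)$, $\gamma(R)=\gamma(A)$ and $\gamma(A)<R<A$. A2: for all events $A,B$: if $\mathrm{Op}^0(B)$, $\mathrm{Add}^0(A)$, $A<B$ and $\mathrm{val}(A)=\mathrm{val}(B)$, then there is an event $R$ with $\mathrm{Rem}^1(R)$, $A=\gamma(R)$ and $R<\mathrm{End}(B)$. Linear specification (for a linear order $<_0$ and function $\gamma$): FS0: $<_0$ is a linear ordering of the events; $\mathrm{Add},\mathrm{Rem},\mathrm{Cnt}$ are pairwise disjoint; $\gamma$ is defined on the $\mathrm{Op}^1$ events and its values are $\mathrm{Add}^0$ events. FS1: for every event $a$ with $\mathrm{Op}^1(a)$: $\gamma(a)<_0 a$, $\mathrm{Add}^0(\gamma(a))$, $\mathrm{val}(a)=\mathrm{val}(\gamma(a))$, and there is no event $r$ with $\mathrm{Rem}^1(r)$, $\gamma(r)=\gamma(a)$ and $\gamma(a)<_0 r<_0 a$. FS2: for all events $a<_0b$ with $\mathrm{Add}^0(a)$ and $\mathrm{Op}^0(b)$: if $\mathrm{val}(a)=\mathrm{val}(b)$ then there is an event $r$ with $a<_0r<_0b$,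 $\mathrm{Rem}^1(r)$ and $a=\gamma(r)$. *)

From Stdlib Require Import List.

Inductive chiv : Type := C0 | C1 | Cf.

Record Exec : Type := {
  Ev : Type;
  Action : Ev -> Prop;          (* low-level events; others are high-level *)
  Add : Ev -> Prop;
  Rem : Ev -> Prop;
  Cnt : Ev -> Prop;
  lt : Ev -> Ev -> Prop;
  Begin : Ev -> Ev;
  End : Ev -> Ev;
  chi : Ev -> chiv;
  val : Ev -> nat;
  gamma : Ev -> Ev
}.

Definition is_system_execution (M : Exec) : Prop :=
  (forall x, ~ lt M x x) /\
  (forall x y z, lt M x y -> lt M y z -> lt M x z) /\
  (forall x, exists l : list (Ev M), forall y, lt M y x -> In y l) /\
  (forall x, exists l : list (Ev M), forall y, ~ In y l -> lt M x y) /\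
  (forall e, Action M e -> Begin M e = e /\ End M e = e) /\
  (forall X Y, lt M X Y <-> lt M (End M X) (Begin M Y)).

Definition AddP (M : Exec) (p : chiv) (a : Ev M) := Add M a /\ chi M a = p.
Definition RemP (M : Exec) (p : chiv) (a : Ev M) := Rem M a /\ chi M a = p.
Definition CntP (M : Exec) (p : chiv) (a : Ev M) := Cnt M a /\ chi M a = p.
(* Op^p, meaningful for p in {0,1} *)
Definition OpP (M : Exec) (p : chiv) (a : Ev M) :=
  (Add M a \/ Rem M a \/ Cnt M a) /\ chi M a = p.

Definition disjoint3 (M : Exec) : Prop :=
  (forall e, ~ (Add M e /\ Rem M e)) /\
  (forall e, ~ (Add M e /\ Cnt M e)) /\
  (forall e, ~ (Rem M e /\ Cnt M e)).

Definition A0 (M : Exec) : Prop :=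
  disjoint3 M /\
  (forall e, Add M e -> Action M e) /\
  (forall e, Rem M e -> Action M e) /\
  (forall e, Cnt M e -> ~ Action M e) /\
  (forall X, Action M (Begin M X) /\ Action M (End M X)) /\
  (forall E, Cnt M E -> lt M (Begin M E) (End M E)) /\
  (forall a b, Action M a -> Action M b -> a <> b -> lt M a b \/ lt M b a).

Definition A1 (M : Exec) : Prop :=
  forall A, OpP M C1 A ->
    AddP M C0 (gamma M A) /\ val M (gamma M A) = val M A /\
    lt M (gamma M A) (End M A) /\
    ~ (exists R, RemP M C1 R /\ gamma M R = gamma M A /\
                 lt M (gamma M A) R /\ lt M R A).

Definition A2 (M : Exec) : Prop :=
  forall A B, OpP M C0 B -> AddP M C0 A -> lt M A B -> val M A = val M B ->
    exists R, RemP M C1 R /\ A = gamma M R /\ lt M R (End M B).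

Definition linear_order {T : Type} (r : T -> T -> Prop) : Prop :=
  (forall x, ~ r x x) /\
  (forall x y z, r x y -> r y z -> r x z) /\
  (forall x y, x <> y -> r x y \/ r y x).

Definition FS0 (M : Exec) (lt0 : Ev M -> Ev M -> Prop) (g : Ev M -> Ev M) :=
  linear_order lt0 /\ disjoint3 M /\
  (forall a, OpP M C1 a -> AddP M C0 (g a)).

Definition FS1 (M : Exec) (lt0 : Ev M -> Ev M -> Prop) (g : Ev M -> Ev M) :=
  forall a, OpP M C1 a ->
    lt0 (g a) a /\ AddP M C0 (g a) /\ val M a = val M (g a) /\
    ~ (exists r, RemP M C1 r /\ g r = g a /\ lt0 (g a) r /\ lt0 r a).

Definition FS2 (M : Exec) (lt0 : Ev M -> Ev M -> Prop) (g : Ev M -> Ev M) :=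
  forall a b, lt0 a b -> AddP M C0 a -> OpP M C0 b -> val M a = val M b ->
    exists r, lt0 a r /\ lt0 r b /\ RemP M C1 r /\ a = g r.

From Stdlib Require Import List ClassicalEpsilon Lia.

(* Every event x is assigned an action q(x) in [Begin x, End x] at which it
   takes effect, ordered just before, as, or just after that action.  Actions
   take effect at themselves.  A successful count takes effect at its start if
   the add it reports already precedes it, and otherwise just after that add.
   An unsuccessful count takes effect just after a successful remove, during
   the count, of an element of its value added before the count began, if
   there is one, and at its start otherwise.  Ordering events by this key, and
   breaking the remaining ties by position in a finite list (all events
   sharing a key action are not after it, hence finitely many by Lamport's
   finiteness property), gives a linear order extending <, and A1, A2 then
   transfer to FS1, FS2 along it; the only subtle case is an unsuccessful
   count placed after a remove r, where A1 at r excludes a competing add. *)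

Section ListIndex.
Context {T : Type}.

Fixpoint index_of (l : list T) (y : T) : nat :=
  match l with
  | nil => 0
  | x :: l' => if excluded_middle_informative (x = y) then 0 else S (index_of l' y)
  end.

Lemma index_of_inj (l : list T) (y1 y2 : T) :
  In y1 l -> In y2 l -> index_of l y1 = index_of l y2 -> y1 = y2.
Proof.
  induction l as [|x l IH]; simpl; [tauto|].
  intros h1 h2 he.
  destruct (excluded_middle_informative (x = y1)) as [e1|n1];
  destruct (excluded_middle_informative (x = y2)) as [e2|n2]; try discriminate.
  - congruence.
  - apply IH; [destruct h1 | destruct h2 | ]; congruence.
Qed.

End ListIndex.

Section LexicographicKey.
Context {T K : Type}.
Variable ltK : K -> K -> Prop.
Variables (key : T -> K) (slot rank : T -> nat).

Definition lex_key (x y : T) : Prop :=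
  ltK (key x) (key y) \/
  (key x = key y /\ (slot x < slot y \/ (slot x = slot y /\ rank x < rank y))).

Hypothesis ltK_irrefl : forall k, ~ ltK k k.
Hypothesis ltK_trans : forall k1 k2 k3, ltK k1 k2 -> ltK k2 k3 -> ltK k1 k3.
Hypothesis ltK_total_on_keys :
  forall x y, key x <> key y -> ltK (key x) (key y) \/ ltK (key y) (key x).
Hypothesis rank_inj_on_keys : forall x y, key x = key y -> rank x = rank y -> x = y.

Lemma lex_key_linear : linear_order lex_key.
Proof.
  unfold lex_key; split; [|split].
  - intros x [h|(_ & h)]; [exact (ltK_irrefl _ h)|lia].
  - intros x y z [h|(e & h)] [h'|(e' & h')].
    + left; eauto.
    + left; rewrite <- e'; exact h.
    + left; rewrite e; exact h'.
    + right; split; [congruence|lia].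
  - intros x y hxy. destruct (classic (key x = key y)) as [e|ne].
    + assert (rank x <> rank y) by (intro; apply hxy, rank_inj_on_keys; auto).
      assert (hlex : (slot x < slot y \/ (slot x = slot y /\ rank x < rank y)) \/
                     (slot y < slot x \/ (slot y = slot x /\ rank y < rank x))) by lia.
      destruct hlex; [left|right]; right; auto.
    + destruct (ltK_total_on_keys _ _ ne); auto.
Qed.

End LexicographicKey.

Section LazySet.
Variable M : Exec.
Hypothesis HM : is_system_execution M.
Hypothesis HA0 : A0 M.
Hypothesis HA1 : A1 M.
Hypothesis HA2 : A2 M.

Definition lte (a b : Ev M) : Prop := a = b \/ lt M a b.

Lemma lt_irrefl x : ~ lt M x x.
Proof. apply HM. Qed.

Lemma lt_trans {x y z} : lt M x y -> lt M y z -> lt M x z.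
Proof. apply HM. Qed.

Lemma lt_asym {x y} : lt M x y -> ~ lt M y x.
Proof. intros h h'; exact (lt_irrefl x (lt_trans h h')). Qed.

Lemma lt_cofinite x : exists l : list (Ev M), forall y, ~ In y l -> lt M x y.
Proof. apply HM. Qed.

Lemma lt_end_begin X Y : lt M X Y <-> lt M (End M X) (Begin M Y).
Proof. apply HM. Qed.

Lemma begin_action {e} : Action M e -> Begin M e = e.
Proof. apply HM. Qed.

Lemma end_action {e} : Action M e -> End M e = e.
Proof. apply HM. Qed.

Lemma action_begin X : Action M (Begin M X).
Proof. apply HA0. Qed.

Lemma action_end X : Action M (End M X).
Proof. apply HA0. Qed.

Lemma lt_total_actions {a b} :
  Action M a -> Action M b -> a <> b -> lt M a b \/ lt M b a.
Proof. apply HA0. Qed.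

Lemma add_action {p a} : AddP M p a -> Action M a.
Proof. intros [h _]; destruct HA0 as (_ & H & _); exact (H a h). Qed.

Lemma rem_action {p r} : RemP M p r -> Action M r.
Proof. intros [h _]; destruct HA0 as (_ & _ & H & _); exact (H r h). Qed.

Lemma cnt_not_action {p x} : CntP M p x -> ~ Action M x.
Proof. intros [h _]; destruct HA0 as (_ & _ & _ & H & _); exact (H x h). Qed.

Lemma add_neq_rem {p p' a r} : AddP M p a -> RemP M p' r -> a <> r.
Proof. intros [ha _] [hr _] <-; apply (proj1 (proj1 HA0) a); auto. Qed.

Lemma op_not_action_cnt {p x} : OpP M p x -> ~ Action M x -> CntP M p x.
Proof.
  intros [[h|[h|h]] hp] hx; [..|split; auto]; exfalso; apply hx.
  - exact (add_action (conj h hp)).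
  - exact (rem_action (conj h hp)).
Qed.

Lemma lte_lt_trans {x y z} : lte x y -> lt M y z -> lt M x z.
Proof. intros [->|h] h'; [exact h'|exact (lt_trans h h')]. Qed.

Lemma lt_lte_trans {x y z} : lt M x y -> lte y z -> lt M x z.
Proof. intros h [<-|h']; [exact h|exact (lt_trans h h')]. Qed.

Lemma not_lt_actions {a b} : Action M a -> Action M b -> ~ lt M a b -> lte b a.
Proof.
  intros ha hb hn. destruct (classic (b = a)) as [e|ne]; [now left|right].
  destruct (lt_total_actions ha hb (fun e => ne (eq_sym e))); tauto.
Qed.

Lemma begin_lte_end X : lte (Begin M X) (End M X).
Proof.
  apply not_lt_actions; [apply action_end|apply action_begin|].
  intros h; apply (lt_irrefl X), lt_end_begin, h.
Qed.

Lemma lt_action_l a Y : Action M a -> (lt M a Y <-> lt M a (Begin M Y)).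
Proof. intros ha; rewrite lt_end_begin, (end_action ha); reflexivity. Qed.

Lemma op1_gamma_action {x} : OpP M C1 x -> Action M (gamma M x).
Proof. intros h; exact (add_action (proj1 (HA1 x h))). Qed.

Lemma rem1_gamma_lt {r} : RemP M C1 r -> lt M (gamma M r) r.
Proof.
  intros h. destruct (HA1 r) as (_ & _ & hlt & _); [destruct h; split; auto|].
  rewrite (end_action (rem_action h)) in hlt; exact hlt.
Qed.

Definition removal_during (b r : Ev M) : Prop :=
  RemP M C1 r /\ val M (gamma M r) = val M b /\ lt M (gamma M r) (Begin M b) /\
  ~ lt M r (Begin M b) /\ lt M r (End M b).

Lemma removal_during_covers {a b r} :
  AddP M C0 a -> val M a = val M b -> lt M a r -> removal_during b r ->
  exists r', RemP M C1 r' /\ a = gamma M r' /\ lte r' r.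
Proof.
  unfold removal_during; intros ha hv har (hr & hvr & hgr & hnr & _).
  pose proof (rem_action hr) as hra.
  destruct (HA1 r) as (hg & _ & _ & hno); [destruct hr; split; auto|].
  destruct (classic (a = gamma M r)) as [e|ne].
  { exists r; split; [exact hr|split; [exact e|left; reflexivity]]. }
  destruct (lt_total_actions (add_action ha) (add_action hg) ne) as [h|h].
  - destruct (HA2 a (gamma M r)) as (r' & hr' & e & hlt);
      [destruct hg; split; auto | exact ha | exact h | congruence |].
    rewrite (end_action (add_action hg)) in hlt.
    exists r'; split; [exact hr'|split; [exact e|right]].
    exact (lt_lte_trans (lt_trans hlt hgr) (not_lt_actions hra (action_begin b) hnr)).
  - destruct (HA2 (gamma M r) a) as (r' & hr' & e & hlt);
      [destruct ha; split; auto | exact hg | exact h | congruence |].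
    rewrite (end_action (add_action ha)) in hlt.
    exfalso; apply hno; exists r'.
    split; [exact hr'|split; [congruence|split]].
    + rewrite e; exact (rem1_gamma_lt hr').
    + exact (lt_trans hlt har).
Qed.

(* [lin_point x p s]: x takes effect at the action p, in slot s = 0, 1 or 2,
   i.e. just before p, as p itself, or just after p. *)
Inductive lin_point (x : Ev M) : Ev M -> nat -> Prop :=
| lin_point_action :
    Action M x -> lin_point x x 1
| lin_point_cnt1_begin :
    CntP M C1 x -> lt M (gamma M x) (Begin M x) -> lin_point x (Begin M x) 0
| lin_point_cnt1_gamma :
    CntP M C1 x -> ~ lt M (gamma M x) (Begin M x) -> lin_point x (gamma M x) 2
| lin_point_cnt0_removal r :
    CntP M C0 x -> removal_during x r -> lin_point x r 2
| lin_point_cnt0_begin :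
    CntP M C0 x -> ~ (exists r, removal_during x r) -> lin_point x (Begin M x) 0
| lin_point_other :
    ~ Action M x -> ~ CntP M C1 x -> ~ CntP M C0 x -> lin_point x (Begin M x) 0.

Lemma lin_point_exists x : exists ps : Ev M * nat, lin_point x (fst ps) (snd ps).
Proof.
  destruct (classic (Action M x)) as [ha|ha].
  { exists (x, 1); now constructor. }
  destruct (classic (CntP M C1 x)) as [hc1|hc1].
  { destruct (classic (lt M (gamma M x) (Begin M x))).
    - exists (Begin M x, 0); now constructor.
    - exists (gamma M x, 2); now constructor. }
  destruct (classic (CntP M C0 x)) as [hc0|hc0].
  { destruct (classic (exists r, removal_during x r)) as [[r hr]|hr].
    - exists (r, 2); now apply lin_point_cnt0_removal.
    - exists (Begin M x, 0); now constructor. }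
  exists (Begin M x, 0); now constructor.
Qed.

Lemma lin_point_slot {x p s} :
  lin_point x p s -> s = 0 \/ (s = 1 /\ p = x) \/ s = 2.
Proof. destruct 1; auto. Qed.

Lemma lin_point_of_action {x p s} : Action M x -> lin_point x p s -> p = x /\ s = 1.
Proof.
  intros hx; destruct 1 as [| h _ | h _ | r h _ | h _ | h _ _]; auto;
    exfalso; [apply (cnt_not_action h) .. | apply h]; exact hx.
Qed.

Lemma lin_point_cnt1 {x p s} : lin_point x p s -> CntP M C1 x ->
  (lt M (gamma M x) (Begin M x) /\ p = Begin M x /\ s = 0) \/
  (~ lt M (gamma M x) (Begin M x) /\ p = gamma M x /\ s = 2).
Proof.
  intros hp hx; pose proof (cnt_not_action hx) as hna; pose proof (proj2 hx) as hc.
  destruct hp as [ha | _ h | _ h | r [_ hc'] _ | [_ hc'] _ | _ hn _];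
    solve [auto | exfalso; auto; congruence].
Qed.

Lemma lin_point_cnt0 {x p s} : lin_point x p s -> CntP M C0 x ->
  (removal_during x p /\ s = 2) \/
  (~ (exists r, removal_during x r) /\ p = Begin M x /\ s = 0).
Proof.
  intros hp hx; pose proof (cnt_not_action hx) as hna; pose proof (proj2 hx) as hc.
  destruct hp as [ha | [_ hc'] _ | [_ hc'] _ | r _ h | _ h | _ _ hn];
    solve [auto | exfalso; auto; congruence].
Qed.

Lemma lin_point_is_action {x p s} : lin_point x p s -> Action M p.
Proof.
  destruct 1 as [h | | h _ | r _ [h _] | |]; auto using action_begin.
  - apply op1_gamma_action; destruct h; split; auto.
  - exact (rem_action h).
Qed.

Lemma lin_point_within {x p s} : lin_point x p s -> lte (Begin M x) p /\ lte p (End M x).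
Proof.
  intros hp; pose proof (lin_point_is_action hp) as hpa.
  destruct hp as [h | | h hn | r _ (_ & _ & _ & hn & hr) | |];
    try (split; [left; reflexivity | apply begin_lte_end]).
  - split; left; [apply begin_action|symmetry; apply end_action]; exact h.
  - split; [exact (not_lt_actions hpa (action_begin x) hn)|right].
    apply HA1; destruct h; split; auto.
  - split; [exact (not_lt_actions hpa (action_begin x) hn)|right; exact hr].
Qed.

Lemma lin_point_not_after {x p s} : lin_point x p s -> ~ lt M p x.
Proof.
  intros hp h. rewrite (lt_action_l _ _ (lin_point_is_action hp)) in h.
  exact (lt_irrefl _ (lte_lt_trans (proj1 (lin_point_within hp)) h)).
Qed.

Section LinOrder.
Variables (q : Ev M -> Ev M) (slot : Ev M -> nat) (L : Ev M -> list (Ev M)).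
Hypothesis q_spec : forall x, lin_point x (q x) (slot x).
Hypothesis L_spec : forall x y, ~ In y (L x) -> lt M x y.

Definition lin_order : Ev M -> Ev M -> Prop :=
  lex_key (lt M) q slot (fun x => index_of (L (q x)) x).

Lemma in_L_lin_point x : In x (L (q x)).
Proof.
  apply NNPP; intros hn.
  exact (lin_point_not_after (q_spec x) (L_spec _ _ hn)).
Qed.

Lemma lin_order_linear : linear_order lin_order.
Proof.
  apply lex_key_linear.
  - exact lt_irrefl.
  - exact @lt_trans.
  - intros x y; apply lt_total_actions; exact (lin_point_is_action (q_spec _)).
  - intros x y e hr. rewrite e in hr.
    apply (index_of_inj (L (q y))); [rewrite <- e|..]; auto using in_L_lin_point.
Qed.

Lemma q_action {a} : Action M a -> q a = a /\ slot a = 1.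
Proof. intros ha; exact (lin_point_of_action ha (q_spec a)). Qed.

Lemma lin_order_action_l c x : Action M c ->
  (lin_order c x <-> lt M c (q x) \/ (c = q x /\ slot x = 2)).
Proof.
  intros hc; unfold lin_order, lex_key.
  destruct (q_action hc) as [-> ->].
  split; intros [h|[e h]]; auto; right; split; auto; [|lia].
  destruct (lin_point_slot (q_spec x)) as [hs|[[hs e']|hs]]; [lia| |lia].
  rewrite e' in e, h; subst c; lia.
Qed.

Lemma lin_order_actions a b : Action M a -> Action M b -> (lin_order a b <-> lt M a b).
Proof.
  intros ha hb; rewrite (lin_order_action_l _ _ ha).
  destruct (q_action hb) as [-> ->]; intuition discriminate.
Qed.

Lemma lin_order_extends x y : lt M x y -> lin_order x y.
Proof.
  intros h; left.
  destruct (lin_point_within (q_spec x)) as [_ hx].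
  destruct (lin_point_within (q_spec y)) as [hy _].
  exact (lt_lte_trans (lte_lt_trans hx (proj1 (lt_end_begin x y) h)) hy).
Qed.

Lemma lin_order_FS1 : FS1 M lin_order (gamma M).
Proof.
  intros a ha. destruct (HA1 a ha) as (hg & hv & hlt & hno).
  pose proof (add_action hg) as hga.
  assert (lin_order (gamma M a) a /\
          forall r, Action M r -> lt M (gamma M a) r -> lin_order r a -> lt M r a)
    as [hfirst hbetween].
  { destruct (classic (Action M a)) as [hA|hA].
    - rewrite (end_action hA) in hlt.
      split; [now apply lin_order_actions|].
      intros r hr _ h; now apply (lin_order_actions _ _ hr hA).
    - rewrite (lin_order_action_l _ _ hga).
      destruct (lin_point_cnt1 (q_spec a) (op_not_action_cnt ha hA))
        as [(hb & hq & hs) | (_ & hq & hs)];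
        rewrite hq, hs; split; auto;
        intros r hr hgr h; rewrite (lin_order_action_l _ _ hr), hq, hs in h.
      + destruct h as [h|[_ h]]; [now apply lt_action_l|discriminate].
      + exfalso; destruct h as [h|[-> _]];
          [exact (lt_asym hgr h)|exact (lt_irrefl _ hgr)]. }
  split; [exact hfirst|split; [exact hg|split; [symmetry; exact hv|]]].
  intros (r & hr & hgr & h1 & h2). apply hno.
  pose proof (rem_action hr) as hra.
  rewrite (lin_order_actions _ _ hga hra) in h1.
  exists r; auto.
Qed.

Lemma lin_order_FS2 : FS2 M lin_order (gamma M).
Proof.
  intros a b hab ha hb hv.
  enough (exists r, RemP M C1 r /\ a = gamma M r /\ lin_order r b)
    as (r & hr & -> & hrb).
  { exists r; split; [|split; [exact hrb|split; [exact hr|reflexivity]]].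
    apply lin_order_actions; [exact (add_action ha)|exact (rem_action hr)|].
    exact (rem1_gamma_lt hr). }
  rewrite (lin_order_action_l _ _ (add_action ha)) in hab.
  destruct (classic (Action M b)) as [hB|hB].
  - destruct (q_action hB) as [hq hs]; rewrite hq, hs in hab.
    destruct hab as [hab|[_ hab]]; [|discriminate].
    destruct (HA2 a b hb ha hab hv) as (r & hr & e & hlt).
    rewrite (end_action hB) in hlt.
    exists r; split; [exact hr|split; [exact e|]].
    rewrite (lin_order_action_l _ _ (rem_action hr)), hq; now left.
  - destruct (lin_point_cnt0 (q_spec b) (op_not_action_cnt hb hB))
      as [(hrem & hs) | (hnone & hq & hs)].
    + destruct hab as [hab|[e _]];
        [|exfalso; exact (add_neq_rem ha (proj1 hrem) e)].
      destruct (removal_during_covers ha hv hab hrem) as (r & hr & e & hle).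
      exists r; split; [exact hr|split; [exact e|]].
      rewrite (lin_order_action_l _ _ (rem_action hr)), hs.
      destruct hle; auto.
    + rewrite hq, hs in hab.
      destruct hab as [hab|[_ hab]]; [|discriminate].
      destruct (HA2 a b hb ha (proj2 (lt_action_l _ _ (add_action ha)) hab) hv)
        as (r & hr & e & hlt).
      exists r; split; [exact hr|split; [exact e|]].
      rewrite (lin_order_action_l _ _ (rem_action hr)), hq.
      left; apply NNPP; intros hn.
      apply hnone; exists r; subst a; unfold removal_during; auto.
Qed.

End LinOrder.

End LazySet.

Theorem theorem3p2 (M : Exec) :
  is_system_execution M -> A0 M -> A1 M -> A2 M ->
  exists lt0 : Ev M -> Ev M -> Prop,
    (forall x y, lt M x y -> lt0 x y) /\
    FS0 M lt0 (gamma M) /\ FS1 M lt0 (gamma M) /\ FS2 M lt0 (gamma M).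
Proof.
  intros HM HA0 HA1 HA2.
  destruct (choice _ (lin_point_exists M)) as [ps ps_spec].
  destruct (choice _ (lt_cofinite M HM)) as [L L_spec].
  set (q := fun x => fst (ps x)); set (slot := fun x => snd (ps x)).
  exists (lin_order M q slot L).
  split; [|split; [|split]].
  - exact (lin_order_extends M HM HA0 HA1 q slot L ps_spec).
  - split; [exact (lin_order_linear M HM HA0 HA1 q slot L ps_spec L_spec)|].
    split; [exact (proj1 HA0)|].
    intros a ha; exact (proj1 (HA1 a ha)).
  - exact (lin_order_FS1 M HM HA0 HA1 q slot L ps_spec).
  - exact (lin_order_FS2 M HM HA0 HA1 HA2 q slot L ps_spec).
Qed.
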